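(* Let $f=\sum_{j=0}^7f_je_j$ be a paravector-valued function on $\mathbb R^8$ whose coordinate functions have partial derivatives, identified with the octonion-valued function with the same coordinates. Then: (a) $f$ is left regular if and only if $[\partial_xfI]_0=0$ and $[\partial_xfI]_1=0$; (b) $f$ is B-regular (both left and right regular) if and only if $[\partial_xfI]_0=0$, $[\partial_xfI]_1=0$, and $[\partial_xfW]_1=0$.
   Context: $\mathrm{Cl}_{0,7}$ is the real associative Clifford algebra generated by $e_1,\dots,e_7$ with $e_ie_j+e_je_i=-2\delta_{ij}$ and $e_0=1$; $e_{i_1\cdots i_k}=e_{i_1}\cdots e_{i_k}$; $[c]_k$ is the grade-$k$ part of $c$. $\partial_xf=\sum_{i,j=0}^7e_ie_j\,\partial_{x_i}f_j$ (Clifford product), and $\partial_xfI$, $\partial_xfW$ denote Clifford products of $\partial_xf$ with $I$, $W$. $W=e_{123}+e_{145}+e_{176}+e_{246}+e_{257}+e_{347}+e_{365}$ and $I=\frac1{16}(1+We_{1234567})(1-e_{1234567})$. $\mathbb O$ is the octonion algebra with basis $1,e_1,\dots,e_7$ and product $\circ$ determined by: $e_i\circ e_i=-1$, $e_i\circ e_j=-e_j\circ e_i$ ($i\ne j$), and $e_i\circ e_j=e_k$, $e_j\circ e_k=e_i$, $e_k\circ e_i=e_j$ for each ordered triple $(i,j,k)\in\{(1,2,3),(1,4,5),(1,7,6),(2,4,6),(2,5,7),(3,4,7),(3,6,5)\}$. For octonion-valued $f$: $D_xf=\sum_{i,j=0}^7e_i\circ e_j\,\partial_{x_i}f_j$,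 $fD_x=\sum_{i,j=0}^7e_j\circ e_i\,\partial_{x_i}f_j$; left regular means $D_xf=0$, right regular means $fD_x=0$. *)

From Stdlib Require Import Reals Arith List Bool.
Open Scope R_scope.

Fixpoint sumR (n : nat) (g : nat -> R) : R :=
  match n with O => 0 | S m => sumR m g + g m end.

Fixpoint cnt (n : nat) (p : nat -> bool) : nat :=
  match n with O => O | S m => (cnt m p + (if p m then 1 else 0))%nat end.

Fixpoint sumN (n : nat) (g : nat -> nat) : nat :=
  match n with O => O | S m => (sumN m g + g m)%nat end.

(* ======================================================================
   The real Clifford algebra Cl_{0,7}, e_i e_j + e_j e_i = -2 delta_ij.
   An element is a function from blade masks A (0 <= A < 128) to R:
   bit (i-1) of A is set iff e_i occurs in the basis blade e_A, whose
   factors are written in increasing order.  Mask 0 is e_0 = 1.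
   ====================================================================== *)
Definition Cl := nat -> R.

(* number of pairs (a in A, b in B) with a > b *)
Definition inv_count (A B : nat) : nat :=
  sumN 7 (fun k => if Nat.testbit A k
                   then cnt k (fun l => Nat.testbit B l) else O).

Definition meet_count (A B : nat) : nat :=
  cnt 7 (fun k => Nat.testbit A k && Nat.testbit B k).

(* e_A e_B = blade_sign A B * e_(A xor B)  (since e_i^2 = -1) *)
Definition blade_sign (A B : nat) : R :=
  if Nat.even (inv_count A B + meet_count A B) then 1 else -1.

Definition cl_mul (x y : Cl) : Cl :=
  fun C => sumR 128 (fun A => blade_sign A (Nat.lxor A C) * x A * y (Nat.lxor A C)).

Definition cl_add (x y : Cl) : Cl := fun A => x A + y A.
Definition cl_scal (r : R) (x : Cl) : Cl := fun A => r * x A.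
Definition cl_sum (n : nat) (g : nat -> Cl) : Cl := fun A => sumR n (fun k => g k A).
Definition cl_one : Cl := fun A => if Nat.eqb A 0 then 1 else 0.

Definition cl_e (i : nat) : Cl :=
  match i with
  | O => cl_one
  | S k => fun A => if Nat.eqb A (2 ^ k)%nat then 1 else 0
  end.

Definition cl_e3 (i j k : nat) : Cl := cl_mul (cl_mul (cl_e i) (cl_e j)) (cl_e k).

Definition cl_e1234567 : Cl :=
  cl_mul (cl_mul (cl_mul (cl_mul (cl_mul (cl_mul (cl_e 1) (cl_e 2)) (cl_e 3))
    (cl_e 4)) (cl_e 5)) (cl_e 6)) (cl_e 7).

Definition cl_W : Cl :=
  cl_add (cl_e3 1 2 3) (cl_add (cl_e3 1 4 5) (cl_add (cl_e3 1 7 6)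
  (cl_add (cl_e3 2 4 6) (cl_add (cl_e3 2 5 7) (cl_add (cl_e3 3 4 7)
  (cl_e3 3 6 5)))))).

Definition cl_I : Cl :=
  cl_scal (1 / 16)
    (cl_mul (cl_add cl_one (cl_mul cl_W cl_e1234567))
            (cl_add cl_one (cl_scal (-1) cl_e1234567))).

Definition grade (k : nat) (c : Cl) : Cl :=
  fun A => if Nat.ltb A 128 && Nat.eqb (cnt 7 (Nat.testbit A)) k then c A else 0.

(* ======================================================================
   Octonions: element = coordinates (nat -> R) on the basis 1,e_1..e_7.
   ====================================================================== *)
Definition Oct := nat -> R.

Definition oct_triples : list (nat * nat * nat) :=
  ((1,2,3) :: (1,4,5) :: (1,7,6) :: (2,4,6) :: (2,5,7) :: (3,4,7) :: (3,6,5) :: nil)%nat.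

(* e_i o e_j = fst (otab i j) * e_(snd (otab i j)) *)
Fixpoint otab_aux (i j : nat) (l : list (nat * nat * nat)) : R * nat :=
  match l with
  | nil => (0%R, O)
  | (a, b, c) :: l' =>
      if Nat.eqb i a && Nat.eqb j b then (1, c)
      else if Nat.eqb i b && Nat.eqb j c then (1, a)
      else if Nat.eqb i c && Nat.eqb j a then (1, b)
      else if Nat.eqb i b && Nat.eqb j a then (-1, c)
      else if Nat.eqb i c && Nat.eqb j b then (-1, a)
      else if Nat.eqb i a && Nat.eqb j c then (-1, b)
      else otab_aux i j l'
  end.

Definition otab (i j : nat) : R * nat :=
  if Nat.eqb i 0 then (1, j)
  else if Nat.eqb j 0 then (1, i)
  else if Nat.eqb i j then (-1, O)
  else otab_aux i j oct_triples.

Definition oe (i : nat) : Oct := fun k => if Nat.eqb k i then 1 else 0.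

Definition omul (x y : Oct) : Oct :=
  fun k => sumR 8 (fun i => sumR 8 (fun j =>
    if Nat.eqb (snd (otab i j)) k then fst (otab i j) * x i * y j else 0)).

Definition oscal (r : R) (x : Oct) : Oct := fun k => r * x k.
Definition osum (n : nat) (g : nat -> Oct) : Oct := fun k => sumR n (fun m => g m k).

(* Points of R^8 are x : nat -> R, coordinates x 0 .. x 7.
   A paravector/octonion valued f has coordinate functions f x j, j = 0..7.
   ====================================================================== *)
Definition upd (x : nat -> R) (i : nat) (t : R) : nat -> R :=
  fun n => if Nat.eqb n i then t else x n.

(* f depends only on the coordinates x_0..x_7 (i.e. f is a function on R^8) *)
Definition on_R8 (f : (nat -> R) -> nat -> R) : Prop :=
  forall x y, (forall n, (n < 8)%nat -> x n = y n) -> f x = f y.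

(* df i j x is the partial derivative d f_j / d x_i at x *)
Definition is_partials (f : (nat -> R) -> nat -> R)
  (df : nat -> nat -> (nat -> R) -> R) : Prop :=
  forall x i j, (i < 8)%nat -> (j < 8)%nat ->
    derivable_pt_lim (fun t => f (upd x i t) j) (x i) (df i j x).

Definition D_left (df : nat -> nat -> (nat -> R) -> R) (x : nat -> R) : Oct :=
  osum 8 (fun i => osum 8 (fun j => oscal (df i j x) (omul (oe i) (oe j)))).

Definition D_right (df : nat -> nat -> (nat -> R) -> R) (x : nat -> R) : Oct :=
  osum 8 (fun i => osum 8 (fun j => oscal (df i j x) (omul (oe j) (oe i)))).

Definition left_regular (df : nat -> nat -> (nat -> R) -> R) : Prop :=
  forall x k, (k < 8)%nat -> D_left df x k = 0.

Definition right_regular (df : nat -> nat -> (nat -> R) -> R) : Prop :=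
  forall x k, (k < 8)%nat -> D_right df x k = 0.

Definition B_regular df : Prop := left_regular df /\ right_regular df.

Definition cl_dirac (df : nat -> nat -> (nat -> R) -> R) (x : nat -> R) : Cl :=
  cl_sum 8 (fun i => cl_sum 8 (fun j => cl_scal (df i j x) (cl_mul (cl_e i) (cl_e j)))).

Definition grade_zero (k : nat) (c : Cl) : Prop := forall A, grade k c A = 0.

(* For i, j < 8 the Clifford product e_i e_j I has, on the blades 1, e_1, ..., e_7,
   exactly the coordinates of (1/16) e_i o e_j, and e_i e_j W has, on e_1, ..., e_7,
   the coordinates of (1/2)(e_j o e_i - e_i o e_j).  By linearity in the partial
   derivatives, [d_x f I]_0 + [d_x f I]_1 is D_x f / 16, and [d_x f W]_1 is half the
   vector part of f D_x - D_x f; the scalar parts of D_x f and f D_x always agree.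
   Hence (a), and, once D_x f = 0, right regularity is equivalent to [d_x f W]_1 = 0.
   The two finite multiplication tables are verified by evaluation in a sparse
   integer representation of Cl_{0,7}. *)

From Stdlib Require Import Reals Lra Lia ZArith List Bool FunctionalExtensionality.
Open Scope R_scope.

Lemma sumR_ext n f g : (forall k, (k < n)%nat -> f k = g k) -> sumR n f = sumR n g.
Proof.
  induction n as [|n IH]; intros H; simpl; [reflexivity|].
  rewrite IH, H by first [lia | intros; apply H; lia]; reflexivity.
Qed.

Lemma sumR_eq0 n f : (forall k, (k < n)%nat -> f k = 0) -> sumR n f = 0.
Proof.
  intros H; rewrite (sumR_ext n f (fun _ => 0)) by exact H; clear H.
  induction n as [|n IH]; simpl; [reflexivity|]; rewrite IH; ring.
Qed.

Lemma sumR_lin n a b f g :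
  sumR n (fun k => a * f k + b * g k) = a * sumR n f + b * sumR n g.
Proof. induction n as [|n IH]; simpl; [ring|]; rewrite IH; ring. Qed.

Lemma sumR_scal n a f : sumR n (fun k => a * f k) = a * sumR n f.
Proof.
  rewrite (sumR_ext n _ (fun k => a * f k + 0 * f k)) by (intros; ring).
  rewrite sumR_lin; ring.
Qed.

Lemma sumR_swap n m g :
  sumR n (fun a => sumR m (fun b => g a b)) = sumR m (fun b => sumR n (fun a => g a b)).
Proof.
  induction n as [|n IH]; simpl.
  - symmetry; apply sumR_eq0; reflexivity.
  - rewrite IH, <- (Rmult_1_l (sumR m _)), <- (Rmult_1_l (sumR m (fun b => g n b))),
      <- sumR_lin.
    apply sumR_ext; intros; ring.
Qed.

Lemma sumR_only n a f :
  (a < n)%nat -> (forall k, (k < n)%nat -> k <> a -> f k = 0) -> sumR n f = f a.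
Proof.
  induction n as [|n IH]; intros Ha H; [lia|]; simpl.
  destruct (Nat.eq_dec a n) as [->|Hne].
  - rewrite sumR_eq0 by (intros; apply H; lia); ring.
  - rewrite IH, (H n) by first [lia | intros; apply H; lia]; ring.
Qed.

Lemma forallb_seq m n (p : nat -> bool) :
  forallb p (seq m n) = true -> forall k, (m <= k < m + n)%nat -> p k = true.
Proof. rewrite forallb_forall; intros H k Hk; apply H, in_seq; lia. Qed.

Definition zsign (A B : nat) : Z :=
  if Nat.even (inv_count A B + meet_count A B) then 1%Z else (-1)%Z.

Lemma blade_sign_IZR A B : blade_sign A B = IZR (zsign A B).
Proof. unfold blade_sign, zsign; destruct (Nat.even _); reflexivity. Qed.

(* A Clifford element with integer coefficients as a list of (blade, coefficient)
   pairs; coefficients of repeated blades add up, so products need no normalisation. *)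
Definition sparse := list (nat * Z).

Fixpoint sp_coef (l : sparse) (C : nat) : Z :=
  match l with
  | nil => 0%Z
  | (B, z) :: l' => ((if Nat.eqb B C then z else 0) + sp_coef l' C)%Z
  end.

Definition cl_of (l : sparse) : Cl := fun C => IZR (sp_coef l C).

Definition sp_mul (l1 l2 : sparse) : sparse :=
  flat_map (fun p => map (fun q =>
    (Nat.lxor (fst p) (fst q), (zsign (fst p) (fst q) * snd p * snd q)%Z)) l2) l1.

Definition sp_opp (l : sparse) : sparse := map (fun p => (fst p, (- snd p)%Z)) l.

Definition sp_blades_lt128 (l : sparse) : bool := forallb (fun p => Nat.ltb (fst p) 128) l.

Lemma sp_coef_app l1 l2 C : sp_coef (l1 ++ l2) C = (sp_coef l1 C + sp_coef l2 C)%Z.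
Proof.
  induction l1 as [|[B z] l IH]; simpl; [reflexivity|]; rewrite IH; ring.
Qed.

Lemma lxor_eq_iff a b C : Nat.lxor a b = C <-> b = Nat.lxor a C.
Proof.
  split; intros; subst; rewrite <- Nat.lxor_assoc, Nat.lxor_nilpotent, Nat.lxor_0_l;
    reflexivity.
Qed.

Lemma sp_coef_mul_single a z l C :
  sp_coef (map (fun q => (Nat.lxor a (fst q), (zsign a (fst q) * z * snd q)%Z)) l) C =
  (zsign a (Nat.lxor a C) * z * sp_coef l (Nat.lxor a C))%Z.
Proof.
  induction l as [|[B w] l IH]; simpl; [ring|]; rewrite IH.
  destruct (Nat.eqb_spec B (Nat.lxor a C)) as [->|HB].
  - rewrite (proj2 (Nat.eqb_eq _ _) (proj2 (lxor_eq_iff a _ C) eq_refl)); ring.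
  - replace (Nat.lxor a B =? C)%nat with false; [ring|].
    symmetry; apply Nat.eqb_neq; intros E; apply HB, lxor_eq_iff, E.
Qed.

(* The bound is needed because [cl_mul] only sums over the blades [A < 128]. *)
Lemma cl_mul_cl_of l1 l2 :
  sp_blades_lt128 l1 = true -> cl_mul (cl_of l1) (cl_of l2) = cl_of (sp_mul l1 l2).
Proof.
  intros Hl1; extensionality C; unfold cl_mul, cl_of.
  induction l1 as [|[a z] l IH]; cbn [sp_coef sp_mul flat_map] in *.
  - apply sumR_eq0; intros; ring.
  - unfold sp_blades_lt128 in *; cbn [forallb fst] in Hl1.
    apply andb_prop in Hl1 as [Ha Hl]; apply Nat.ltb_lt in Ha.
    rewrite sp_coef_app, plus_IZR, sp_coef_mul_single.
    fold (sp_mul l l2); rewrite <- IH by exact Hl.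
    rewrite (sumR_ext _ _ (fun A =>
      1 * (blade_sign A (Nat.lxor A C) * IZR (if (a =? A)%nat then z else 0)
           * IZR (sp_coef l2 (Nat.lxor A C)))
      + 1 * (blade_sign A (Nat.lxor A C) * IZR (sp_coef l A)
           * IZR (sp_coef l2 (Nat.lxor A C))))) by (intros; rewrite plus_IZR; ring).
    rewrite sumR_lin, (sumR_only _ a) by
      (try exact Ha; intros A _ HA; rewrite (proj2 (Nat.eqb_neq a A)) by auto; ring).
    rewrite Nat.eqb_refl, blade_sign_IZR, !mult_IZR; cbn [fst snd]; ring.
Qed.

Lemma cl_add_cl_of l1 l2 : cl_add (cl_of l1) (cl_of l2) = cl_of (l1 ++ l2).
Proof. extensionality C; unfold cl_add, cl_of; rewrite sp_coef_app, plus_IZR; reflexivity. Qed.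

Lemma cl_scal_opp_cl_of l : cl_scal (-1) (cl_of l) = cl_of (sp_opp l).
Proof.
  extensionality C; unfold cl_scal, cl_of.
  induction l as [|[B z] l IH]; simpl; [ring|].
  rewrite !plus_IZR, <- IH; destruct (B =? C)%nat; rewrite ?opp_IZR; ring.
Qed.

Definition gen_blade (i : nat) : nat := match i with O => O | S k => (2 ^ k)%nat end.

Definition sp_e (i : nat) : sparse := (gen_blade i, 1%Z) :: nil.

Lemma cl_e_cl_of i : cl_e i = cl_of (sp_e i).
Proof.
  extensionality A; unfold cl_of; destruct i; cbn [cl_e sp_e sp_coef gen_blade];
    unfold cl_one; rewrite Nat.eqb_sym; destruct (_ =? _)%nat; reflexivity.
Qed.

Definition sp_e3 (i j k : nat) : sparse := sp_mul (sp_mul (sp_e i) (sp_e j)) (sp_e k).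

Definition sp_W : sparse :=
  sp_e3 1 2 3 ++ sp_e3 1 4 5 ++ sp_e3 1 7 6 ++ sp_e3 2 4 6 ++ sp_e3 2 5 7
  ++ sp_e3 3 4 7 ++ sp_e3 3 6 5.

Definition sp_e1234567 : sparse :=
  sp_mul (sp_mul (sp_mul (sp_mul (sp_mul (sp_mul (sp_e 1) (sp_e 2)) (sp_e 3))
    (sp_e 4)) (sp_e 5)) (sp_e 6)) (sp_e 7).

Definition sp_16I : sparse :=
  sp_mul (sp_e 0 ++ sp_mul sp_W sp_e1234567) (sp_e 0 ++ sp_opp sp_e1234567).

Lemma cl_W_cl_of : cl_W = cl_of sp_W.
Proof.
  unfold cl_W, cl_e3; rewrite !cl_e_cl_of.
  repeat rewrite cl_mul_cl_of by (vm_compute; reflexivity).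
  rewrite !cl_add_cl_of; reflexivity.
Qed.

Lemma cl_I_cl_of : cl_I = cl_scal (1 / 16) (cl_of sp_16I).
Proof.
  unfold cl_I, cl_e1234567; rewrite cl_W_cl_of, !cl_e_cl_of.
  repeat rewrite cl_mul_cl_of by (vm_compute; reflexivity).
  change cl_one with (cl_e 0); rewrite cl_e_cl_of, cl_scal_opp_cl_of, !cl_add_cl_of,
    cl_mul_cl_of by (vm_compute; reflexivity).
  reflexivity.
Qed.

Lemma cl_mul_scal_l c X Y C : cl_mul (cl_scal c X) Y C = c * cl_mul X Y C.
Proof. unfold cl_mul, cl_scal; rewrite <- sumR_scal; apply sumR_ext; intros; ring. Qed.

Lemma cl_mul_scal_r c X Y C : cl_mul X (cl_scal c Y) C = c * cl_mul X Y C.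
Proof. unfold cl_mul, cl_scal; rewrite <- sumR_scal; apply sumR_ext; intros; ring. Qed.

Lemma cl_mul_sum_l n F Y C : cl_mul (cl_sum n F) Y C = sumR n (fun k => cl_mul (F k) Y C).
Proof.
  unfold cl_mul, cl_sum; rewrite <- sumR_swap; apply sumR_ext; intros A _.
  rewrite <- sumR_scal, (Rmult_comm _ (Y _)), <- sumR_scal.
  apply sumR_ext; intros; ring.
Qed.

Lemma cl_dirac_mul df x Y C :
  cl_mul (cl_dirac df x) Y C =
  sumR 8 (fun i => sumR 8 (fun j => df i j x * cl_mul (cl_mul (cl_e i) (cl_e j)) Y C)).
Proof.
  unfold cl_dirac; rewrite cl_mul_sum_l; apply sumR_ext; intros.
  rewrite cl_mul_sum_l; apply sumR_ext; intros; apply cl_mul_scal_l.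
Qed.

(* An integer copy of [otab_aux], which unlike [R] can be evaluated. *)
Fixpoint otabz_aux (i j : nat) (l : list (nat * nat * nat)) : Z * nat :=
  match l with
  | nil => (0%Z, O)
  | (a, b, c) :: l' =>
      if Nat.eqb i a && Nat.eqb j b then (1%Z, c)
      else if Nat.eqb i b && Nat.eqb j c then (1%Z, a)
      else if Nat.eqb i c && Nat.eqb j a then (1%Z, b)
      else if Nat.eqb i b && Nat.eqb j a then ((-1)%Z, c)
      else if Nat.eqb i c && Nat.eqb j b then ((-1)%Z, a)
      else if Nat.eqb i a && Nat.eqb j c then ((-1)%Z, b)
      else otabz_aux i j l'
  end.

Definition otabz (i j : nat) : Z * nat :=
  if Nat.eqb i 0 then (1%Z, j)
  else if Nat.eqb j 0 then (1%Z, i)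
  else if Nat.eqb i j then ((-1)%Z, O)
  else otabz_aux i j oct_triples.

Lemma otab_aux_IZR i j l :
  otab_aux i j l = (IZR (fst (otabz_aux i j l)), snd (otabz_aux i j l)).
Proof.
  induction l as [|[[a b] c] l IH]; cbn [otab_aux otabz_aux]; [reflexivity|].
  repeat match goal with |- context [if ?t then _ else _] => destruct t end;
    assumption || reflexivity.
Qed.

Lemma otab_IZR i j : otab i j = (IZR (fst (otabz i j)), snd (otabz i j)).
Proof.
  unfold otab, otabz.
  destruct (i =? 0)%nat, (j =? 0)%nat, (i =? j)%nat; apply otab_aux_IZR || reflexivity.
Qed.

Definition octz (i j k : nat) : Z :=
  if Nat.eqb (snd (otabz i j)) k then fst (otabz i j) else 0%Z.

Lemma omul_oe i j k : (i < 8)%nat -> (j < 8)%nat -> omul (oe i) (oe j) k = IZR (octz i j k).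
Proof.
  intros Hi Hj; unfold omul, oe.
  rewrite (sumR_only _ i) by (try exact Hi; intros a _ Ha; apply sumR_eq0; intros;
    rewrite (proj2 (Nat.eqb_neq a i) Ha); destruct (_ =? _)%nat; ring).
  rewrite (sumR_only _ j) by (try exact Hj; intros b _ Hb;
    rewrite (proj2 (Nat.eqb_neq b j) Hb); destruct (_ =? _)%nat; ring).
  rewrite !Nat.eqb_refl, otab_IZR; unfold octz; cbn [fst snd].
  destruct (_ =? _)%nat; ring.
Qed.

Definition forall_lt8 (p : nat -> bool) : bool := forallb p (seq 0 8).

Lemma forall_lt8_spec p : forall_lt8 p = true -> forall k, (k < 8)%nat -> p k = true.
Proof. intros H k Hk; apply (forallb_seq 0 8 p H); lia. Qed.

Lemma sp_e_mul_lt128 i j : (i < 8)%nat -> (j < 8)%nat ->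
  sp_blades_lt128 (sp_e i) = true /\ sp_blades_lt128 (sp_mul (sp_e i) (sp_e j)) = true.
Proof.
  intros Hi Hj.
  assert (H : forall_lt8 (fun i => forall_lt8 (fun j =>
    sp_blades_lt128 (sp_e i) && sp_blades_lt128 (sp_mul (sp_e i) (sp_e j)))) = true)
    by (vm_compute; reflexivity).
  apply andb_prop, (forall_lt8_spec _ (forall_lt8_spec _ H i Hi) j Hj).
Qed.

Lemma sp_16I_gen_blade i j k : (i < 8)%nat -> (j < 8)%nat -> (k < 8)%nat ->
  sp_coef (sp_mul (sp_mul (sp_e i) (sp_e j)) sp_16I) (gen_blade k) = octz i j k.
Proof.
  intros Hi Hj Hk.
  assert (H : forall_lt8 (fun i => forall_lt8 (fun j => forall_lt8 (fun k =>
    Z.eqb (sp_coef (sp_mul (sp_mul (sp_e i) (sp_e j)) sp_16I) (gen_blade k))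
          (octz i j k)))) = true) by (vm_compute; reflexivity).
  apply Z.eqb_eq, (forall_lt8_spec _ (forall_lt8_spec _ (forall_lt8_spec _ H i Hi) j Hj) k Hk).
Qed.

Lemma sp_W_gen_blade i j k : (i < 8)%nat -> (j < 8)%nat -> (1 <= k < 8)%nat ->
  (2 * sp_coef (sp_mul (sp_mul (sp_e i) (sp_e j)) sp_W) (gen_blade k) =
   octz j i k - octz i j k)%Z.
Proof.
  intros Hi Hj Hk.
  assert (H : forall_lt8 (fun i => forall_lt8 (fun j => forallb (fun k =>
    Z.eqb (2 * sp_coef (sp_mul (sp_mul (sp_e i) (sp_e j)) sp_W) (gen_blade k))
          (octz j i k - octz i j k)) (seq 1 7))) = true) by (vm_compute; reflexivity).
  apply Z.eqb_eq, (forallb_seq 1 7 _ (forall_lt8_spec _ (forall_lt8_spec _ H i Hi) j Hj));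
    lia.
Qed.

Lemma octz_scalar_comm i j : (i < 8)%nat -> (j < 8)%nat -> octz i j 0 = octz j i 0.
Proof.
  intros Hi Hj.
  assert (H : forall_lt8 (fun i => forall_lt8 (fun j => Z.eqb (octz i j 0) (octz j i 0)))
    = true) by (vm_compute; reflexivity).
  apply Z.eqb_eq, (forall_lt8_spec _ (forall_lt8_spec _ H i Hi) j Hj).
Qed.

Lemma cl_e_mul_cl_of i j l C : (i < 8)%nat -> (j < 8)%nat ->
  cl_mul (cl_mul (cl_e i) (cl_e j)) (cl_of l) C =
  IZR (sp_coef (sp_mul (sp_mul (sp_e i) (sp_e j)) l) C).
Proof.
  intros Hi Hj; destruct (sp_e_mul_lt128 i j Hi Hj) as [Hei Heij].
  rewrite !cl_e_cl_of, cl_mul_cl_of, cl_mul_cl_of by assumption; reflexivity.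
Qed.

Lemma cl_e_mul_I_gen_blade i j k : (i < 8)%nat -> (j < 8)%nat -> (k < 8)%nat ->
  cl_mul (cl_mul (cl_e i) (cl_e j)) cl_I (gen_blade k) = / 16 * omul (oe i) (oe j) k.
Proof.
  intros Hi Hj Hk.
  rewrite cl_I_cl_of, cl_mul_scal_r, cl_e_mul_cl_of, sp_16I_gen_blade, omul_oe by assumption.
  unfold Rdiv; ring.
Qed.

Lemma cl_e_mul_W_gen_blade i j k : (i < 8)%nat -> (j < 8)%nat -> (1 <= k < 8)%nat ->
  cl_mul (cl_mul (cl_e i) (cl_e j)) cl_W (gen_blade k) =
  / 2 * (omul (oe j) (oe i) k - omul (oe i) (oe j) k).
Proof.
  intros Hi Hj Hk.
  rewrite cl_W_cl_of, cl_e_mul_cl_of, !omul_oe by (assumption || lia).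
  rewrite <- minus_IZR, <- (sp_W_gen_blade i j k), mult_IZR by assumption.
  field.
Qed.

Lemma dirac_I_gen_blade df x k : (k < 8)%nat ->
  cl_mul (cl_dirac df x) cl_I (gen_blade k) = / 16 * D_left df x k.
Proof.
  intros Hk; rewrite cl_dirac_mul; unfold D_left, osum, oscal.
  rewrite <- sumR_scal; apply sumR_ext; intros i Hi.
  rewrite <- sumR_scal; apply sumR_ext; intros j Hj.
  rewrite cl_e_mul_I_gen_blade by assumption; ring.
Qed.

Lemma dirac_W_gen_blade df x k : (1 <= k < 8)%nat ->
  cl_mul (cl_dirac df x) cl_W (gen_blade k) = / 2 * (D_right df x k - D_left df x k).
Proof.
  intros Hk; rewrite cl_dirac_mul; unfold D_left, D_right, osum, oscal.
  unfold Rminus; rewrite Rmult_plus_distr_l, <- Ropp_mult_distr_r, Ropp_mult_distr_l,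
    <- sumR_lin.
  apply sumR_ext; intros i Hi; rewrite <- sumR_lin; apply sumR_ext; intros j Hj.
  rewrite cl_e_mul_W_gen_blade by assumption; ring.
Qed.

Lemma D_right_scalar df x : D_right df x 0%nat = D_left df x 0%nat.
Proof.
  unfold D_left, D_right, osum, oscal; apply sumR_ext; intros i Hi; apply sumR_ext;
    intros j Hj.
  rewrite !omul_oe, octz_scalar_comm by assumption; reflexivity.
Qed.

Definition grade_blades (k : nat) : list nat :=
  filter (fun A => Nat.eqb (cnt 7 (Nat.testbit A)) k) (seq 0 128).

Lemma grade_zero_iff k c : grade_zero k c <-> forall A, In A (grade_blades k) -> c A = 0.
Proof.
  unfold grade_zero, grade, grade_blades; split.
  - intros H A Hin; apply filter_In in Hin as [HA Hk]; apply in_seq in HA.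
    specialize (H A); rewrite (proj2 (Nat.ltb_lt A 128)), Hk in H by lia; exact H.
  - intros H A.
    destruct (Nat.ltb_spec A 128), (Nat.eqb (cnt 7 (Nat.testbit A)) k) eqn:Hk;
      try reflexivity.
    apply H, filter_In; split; [apply in_seq; lia | exact Hk].
Qed.

Lemma grade_zero_scalar c : grade_zero 0 c <-> c 0%nat = 0.
Proof.
  rewrite grade_zero_iff; change (grade_blades 0) with (0%nat :: nil); simpl.
  split; [auto | intros H A [<- | []]; exact H].
Qed.

Lemma grade_zero_vector c :
  grade_zero 1 c <-> forall k, (1 <= k < 8)%nat -> c (gen_blade k) = 0.
Proof.
  rewrite grade_zero_iff.
  replace (grade_blades 1) with (map gen_blade (seq 1 7)) by (vm_compute; reflexivity).
  split.
  - intros H k Hk; apply H, in_map, in_seq; lia.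
  - intros H A HA; apply in_map_iff in HA as [k [<- Hk]]; apply in_seq in Hk.
    apply H; lia.
Qed.

Lemma left_regular_at_iff df x :
  (forall k, (k < 8)%nat -> D_left df x k = 0) <->
  grade_zero 0 (cl_mul (cl_dirac df x) cl_I) /\ grade_zero 1 (cl_mul (cl_dirac df x) cl_I).
Proof.
  rewrite grade_zero_scalar, grade_zero_vector.
  change (cl_mul (cl_dirac df x) cl_I 0%nat) with (cl_mul (cl_dirac df x) cl_I (gen_blade 0)).
  split.
  - intros H; split; [| intros k Hk];
      rewrite dirac_I_gen_blade, H by lia; ring.
  - intros [H0 H1] k Hk.
    assert (Hblade : cl_mul (cl_dirac df x) cl_I (gen_blade k) = 0)
      by (destruct k; [exact H0 | apply H1; lia]).
    rewrite dirac_I_gen_blade in Hblade by exact Hk; lra.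
Qed.

Lemma right_regular_at_iff df x :
  (forall k, (k < 8)%nat -> D_left df x k = 0) ->
  ((forall k, (k < 8)%nat -> D_right df x k = 0) <->
   grade_zero 1 (cl_mul (cl_dirac df x) cl_W)).
Proof.
  intros HL; rewrite grade_zero_vector; split.
  - intros HR k Hk; rewrite dirac_W_gen_blade, HL, HR by lia; ring.
  - intros HW [|k] Hk.
    + rewrite D_right_scalar; apply HL; lia.
    + specialize (HW (S k) ltac:(lia)).
      rewrite dirac_W_gen_blade, HL in HW by lia; lra.
Qed.

Theorem theorem5p2 (f : (nat -> R) -> nat -> R)
  (df : nat -> nat -> (nat -> R) -> R)
  (Hf : on_R8 f) (Hdf : is_partials f df) :
  (left_regular df <->
     forall x, grade_zero 0 (cl_mul (cl_dirac df x) cl_I) /\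
               grade_zero 1 (cl_mul (cl_dirac df x) cl_I)) /\
  (B_regular df <->
     forall x, grade_zero 0 (cl_mul (cl_dirac df x) cl_I) /\
               grade_zero 1 (cl_mul (cl_dirac df x) cl_I) /\
               grade_zero 1 (cl_mul (cl_dirac df x) cl_W)).
Proof.
  (* Both parts are pointwise identities between linear forms in the numbers
     [df i j x]. *)
  clear Hf Hdf.
  unfold B_regular, left_regular, right_regular.
  assert (Hleft : (forall x k, (k < 8)%nat -> D_left df x k = 0) <->
    forall x, grade_zero 0 (cl_mul (cl_dirac df x) cl_I) /\
              grade_zero 1 (cl_mul (cl_dirac df x) cl_I))
    by (split; intros H x; apply left_regular_at_iff, H).
  split; [exact Hleft|]; split.
  - intros [HL HR] x.
    destruct (proj1 (left_regular_at_iff df x) (HL x)) as [H0 H1].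
    split; [exact H0 | split; [exact H1 | apply right_regular_at_iff; auto]].
  - intros H.
    assert (HL : forall x k, (k < 8)%nat -> D_left df x k = 0)
      by (apply Hleft; intros x; destruct (H x) as [H0 [H1 _]]; split; assumption).
    split; [exact HL|]; intros x.
    apply (right_regular_at_iff df x (HL x)), (proj2 (proj2 (H x))).
Qed.
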